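(* The variety $\mathbb{ML}^{\Box\Diamond}_{\mathrm{d}}$ is generated by its finite members; that is, an identity in the signature $\{\wedge,\vee,\neg,\Box,\Diamond,0,1\}$ holds in every algebra of $\mathbb{ML}^{\Box\Diamond}_{\mathrm{d}}$ if and only if it holds in every finite algebra of $\mathbb{ML}^{\Box\Diamond}_{\mathrm{d}}$.
   Context: A meet-complemented lattice is a lattice $(L,\le)$ such that for every $a\in L$ the element $\neg a=\max\{b\in L: a\wedge b\le c\ \text{for all } c\in L\}$ exists; it is bounded with bottom $0$ and top $1$. For $a\in L$, $\Box a=\max\{b\in L: a\vee\neg b=1\}$ and $\Diamond a=\min\{b\in L: \neg a\vee b=1\}$, when these exist. $\mathbb{ML}^{\Box\Diamond}_{\mathrm{d}}$ is the class of distributive meet-complemented lattices in which $\Box a$ and $\Diamond a$ exist for every $a$, considered as algebras $(L;\wedge,\vee,\neg,\Box,\Diamond,0,1)$. *)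

From HB Require Import structures.
From mathcomp Require Import all_boot all_order.
Set Implicit Arguments. Unset Strict Implicit. Unset Printing Implicit Defensive.
Import Order.TTheory.
Local Open Scope order_scope.

Definition is_max d (L : porderType d) (P : L -> Prop) (x : L) :=
  P x /\ forall y, P y -> y <= x.
Definition is_min d (L : porderType d) (P : L -> Prop) (x : L) :=
  P x /\ forall y, P y -> x <= y.

Definition MLbd d (L : tbDistrLatticeType d) (neg box dia : L -> L) : Prop :=
  [/\ (forall a : L, is_max (fun b => forall c : L, a `&` b <= c) (neg a)),
      (forall a : L, is_max (fun b => a `|` neg b = \top) (box a)) &
      (forall a : L, is_min (fun b => neg a `|` b = \top) (dia a))].

Inductive term : Type :=
  | tVar of nat
  | tMeet of term & term
  | tJoin of term & term
  | tNeg of term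
  | tBox of term
  | tDia of term
  | tZero
  | tOne.

Fixpoint eval d (L : tbDistrLatticeType d) (neg box dia : L -> L)
    (v : nat -> L) (t : term) : L :=
  match t with
  | tVar n => v n
  | tMeet t1 t2 => eval neg box dia v t1 `&` eval neg box dia v t2
  | tJoin t1 t2 => eval neg box dia v t1 `|` eval neg box dia v t2
  | tNeg t1 => neg (eval neg box dia v t1)
  | tBox t1 => box (eval neg box dia v t1)
  | tDia t1 => dia (eval neg box dia v t1)
  | tZero => \bot
  | tOne => \top
  end.

Definition holds d (L : tbDistrLatticeType d) (neg box dia : L -> L)
    (t1 t2 : term) : Prop :=
  forall v : nat -> L, eval neg box dia v t1 = eval neg box dia v t2.

(** Given a valuation into some L in MLbd, only finitely many elements of L
    matter for evaluating two terms: the values of their subterms together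
    with the negations of these values.  The bounded sublattice generated by
    them is finite (its elements are joins of meets of generators), hence
    carries its own meet-complement, box and diamond.  Each of these agrees
    with the one of L whenever the corresponding value of L already lies in
    the sublattice, because all three are defined by extremality conditions
    that only involve meets, joins, 0 and 1.  Hence both terms evaluate in
    the finite algebra exactly as in L. *)

From mathcomp Require Import all_boot all_order.
From HB Require Import structures.
Set Implicit Arguments. Unset Strict Implicit. Unset Printing Implicit Defensive.
Import Order.TTheory.
Local Open Scope order_scope.

Lemma meetx_joins d (L : bDistrLatticeType d) (I : Type) (r : seq I)
    (P : pred I) (F : I -> L) (x : L) :
  x `&` \join_(i <- r | P i) F i = \join_(i <- r | P i) (x `&` F i).
Proof. exact: (big_endo _ (meetUr x) (meetx0 x)). Qed.

Section GeneratedSublattice.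
Variables (d : Order.disp_t) (L : tbDistrLatticeType d).
Variables (I : finType) (gen : I -> L).

Definition meet_gens (A : {set I}) : L := \meet_(i in A) gen i.

Definition gens_core (x : L) : L := \join_(A : {set I} | meet_gens A <= x) meet_gens A.

Definition generated : {pred L} := fun x => x == gens_core x.

Lemma gens_core_le x : gens_core x <= x.
Proof. by apply/joinsP. Qed.

Lemma generatedP x : x <= gens_core x -> x \in generated.
Proof. by move=> le_x; rewrite unfold_in /generated eq_le le_x gens_core_le. Qed.

Lemma gens_coreE x : x \in generated -> gens_core x = x.
Proof. by rewrite unfold_in /generated => /eqP <-. Qed.

Lemma generated_gen i : gen i \in generated.
Proof. by apply: generatedP; apply: (joins_min (j := [set i])); rewrite /meet_gens big_set1. Qed.

Lemma generated_meet : meet_closed generated.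
Proof.
move=> x y Gx Gy; apply: generatedP.
rewrite -{1}(gens_coreE Gx) -{1}(gens_coreE Gy).
rewrite meetC meetx_joins; apply/joinsP => A leAx.
rewrite meetC meetx_joins; apply/joinsP => B leBy.
by apply: (joins_min (j := A :|: B)); rewrite /meet_gens meets_setU ?leI2.
Qed.

Lemma generated_join : join_closed generated.
Proof.
move=> x y Gx Gy; apply: generatedP.
rewrite -{1}(gens_coreE Gx) -{1}(gens_coreE Gy) leUx.
by apply/andP; split; apply/joinsP => A leA; apply: (joins_min (j := A));
  rewrite // (le_trans leA) ?leUl ?leUr.
Qed.

Lemma generated_bot : \bot \in generated.
Proof. by apply: generatedP; rewrite le0x. Qed.

Lemma generated_top : \top \in generated.
Proof. by apply: generatedP; apply: (joins_min (j := set0)); rewrite /meet_gens big_set0. Qed.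

HB.instance Definition _ := Order.isTBLatticeClosed.Build d L generated
  generated_meet generated_join generated_bot generated_top.

Definition Generated := {x : L | x \in generated}.
HB.instance Definition _ := [isSub of Generated for @sval L (fun x => x \in generated)].
HB.instance Definition _ := [Choice of Generated by <:].
HB.instance Definition _ := [SubChoice_isTBSubLattice of Generated by <: with d].

Lemma Generated_meetUl : @left_distributive Generated Generated Order.meet Order.join.
Proof. by move=> x y z; apply: val_inj; apply: meetUl. Qed.
HB.instance Definition _ :=
  Order.Lattice_Meet_isDistrLattice.Build d Generated Generated_meetUl.

(* Finiteness: an element of the sublattice is determined by the set of
   meets of generators below it. *)
Definition Generated_code (x : Generated) : {set {set I}} :=
  [set A | meet_gens A <= val x].
Definition Generated_decode (X : {set {set I}}) : option Generated :=
  insub (\join_(A in X) meet_gens A).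

Lemma Generated_codeK : pcancel Generated_code Generated_decode.
Proof.
move=> x; rewrite /Generated_decode (eq_bigl (fun A => meet_gens A <= val x)).
  by rewrite -/(gens_core (val x)) gens_coreE ?valK // (valP x).
by move=> A; rewrite inE.
Qed.
HB.instance Definition _ := PCanIsCountable Generated_codeK.
HB.instance Definition _ := isFinite.Build Generated (pcan_enumP Generated_codeK).

End GeneratedSublattice.

Section FiniteMLbd.
Variables (d : Order.disp_t) (F : finTBDistrLatticeType d).

Definition negF (a : F) : F := \join_(b : F | a `&` b == \bot) b.
Definition boxF (a : F) : F := \join_(b : F | a `|` negF b == \top) b.
Definition diaF (a : F) : F := \meet_(b : F | negF a `|` b == \top) b.

Lemma meet_negF a : a `&` negF a = \bot.
Proof. by apply: joins_disjoint => b /eqP. Qed.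

Lemma negF_max a b : a `&` b = \bot -> b <= negF a.
Proof. by move=> ab0; apply: (joins_sup (j := b)); rewrite ab0. Qed.

Lemma negF_bot : negF \bot = \top.
Proof. by apply/eqP; rewrite -le1x negF_max ?meet0x. Qed.

Lemma negF_join a b : negF a `&` negF b <= negF (a `|` b).
Proof.
apply: negF_max; rewrite meetUl meetA meet_negF meet0x join0x.
by rewrite meetCA meet_negF meetx0.
Qed.

Lemma join_negF_boxF a : a `|` negF (boxF a) = \top.
Proof.
rewrite /boxF; elim/big_ind: _ => [|x y ax ay|b /eqP //].
  by rewrite negF_bot joinx1.
by apply/eqP; rewrite -le1x -(meetxx \top) -{1}ax -ay -joinIr leU2 ?negF_join.
Qed.

Lemma MLbd_finite : MLbd negF boxF diaF.
Proof.
split=> a; split.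
- by move=> c; rewrite meet_negF le0x.
- by move=> b ab_le; apply: negF_max; apply/eqP; rewrite -lex0.
- exact: join_negF_boxF.
- by move=> b ab1; apply: (joins_sup (j := b)); rewrite ab1.
- by apply: meets_total => b /eqP.
- by move=> b ab1; apply: (meets_inf (j := b)); rewrite ab1.
Qed.

End FiniteMLbd.

Section MLbdTheory.
Variables (d : Order.disp_t) (L : tbDistrLatticeType d) (neg box dia : L -> L).
Hypothesis HL : MLbd neg box dia.

Lemma meet_neg a : a `&` neg a = \bot.
Proof. by case: HL => Hneg _ _; apply/eqP; rewrite -lex0; apply: (Hneg a).1. Qed.

Lemma neg_max a b : a `&` b = \bot -> b <= neg a.
Proof. by case: HL => Hneg _ _ ab0; apply: (Hneg a).2 => c; rewrite ab0 le0x. Qed.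

Lemma join_neg_box a : a `|` neg (box a) = \top.
Proof. by case: HL => _ Hbox _; apply: (Hbox a).1. Qed.

Lemma box_max a b : a `|` neg b = \top -> b <= box a.
Proof. by case: HL => _ Hbox _; apply: (Hbox a).2. Qed.

Lemma join_neg_dia a : neg a `|` dia a = \top.
Proof. by case: HL => _ _ Hdia; apply: (Hdia a).1. Qed.

Lemma dia_min a b : neg a `|` b = \top -> dia a <= b.
Proof. by case: HL => _ _ Hdia; apply: (Hdia a).2. Qed.

End MLbdTheory.

Section Embedding.
Variables (d : Order.disp_t) (L : tbDistrLatticeType d) (neg box dia : L -> L).
Hypothesis HL : MLbd neg box dia.
Variables (d' : Order.disp_t) (M : tbDistrLatticeType d') (negM boxM diaM : M -> M).
Hypothesis HM : MLbd negM boxM diaM.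
Variable h : M -> L.
Hypothesis h_inj : injective h.
Hypothesis hI : forall x y, h (x `&` y) = h x `&` h y.
Hypothesis hU : forall x y, h (x `|` y) = h x `|` h y.
Hypothesis h0 : h \bot = \bot.
Hypothesis h1 : h \top = \top.

Local Notation in_range x := (exists y, h y = x).

Lemma emb_le x y : (h x <= h y) = (x <= y).
Proof.
apply/idP/idP => /meet_idPl xy; last by rewrite -xy hI leIr.
by apply/meet_idPl; apply: h_inj; rewrite hI.
Qed.

Lemma emb_neg_le x : h (negM x) <= neg (h x).
Proof. by apply: (neg_max HL); rewrite -hI (meet_neg HM) h0. Qed.

Lemma emb_neg x : in_range (neg (h x)) -> h (negM x) = neg (h x).
Proof.
case=> y hy; apply/le_anti; rewrite emb_neg_le -hy emb_le /=.
by apply: (neg_max HM); apply: h_inj; rewrite hI hy (meet_neg HL) h0.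
Qed.

Lemma emb_box x : in_range (box (h x)) -> in_range (neg (box (h x))) ->
  h (boxM x) = box (h x).
Proof.
move=> [y hy] negy_range.
have hny : h (negM y) = neg (h y) by apply: emb_neg; rewrite hy.
apply/le_anti; apply/andP; split.
  apply: (box_max HL); apply/eqP; rewrite eq_le lex1 /=.
  by rewrite -h1 -(join_neg_box HM x) hU leU2 ?emb_neg_le.
rewrite -hy emb_le; apply: (box_max HM); apply: h_inj.
by rewrite hU hny hy (join_neg_box HL) h1.
Qed.

Lemma emb_dia x : in_range (neg (h x)) -> in_range (dia (h x)) ->
  h (diaM x) = dia (h x).
Proof.
move=> negx_range [z hz]; have hnx := emb_neg negx_range.
apply/le_anti; apply/andP; split.
  rewrite -hz emb_le; apply: (dia_min HM); apply: h_inj.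
  by rewrite hU hnx hz (join_neg_dia HL) h1.
by apply: (dia_min HL); rewrite -hnx -hU (join_neg_dia HM) h1.
Qed.

Variables (v : nat -> L) (vM : nat -> M).

Fixpoint subterm_values (t : term) : seq L :=
  [:: eval neg box dia v t, neg (eval neg box dia v t) &
  match t with
  | tMeet a b | tJoin a b => subterm_values a ++ subterm_values b
  | tNeg a | tBox a | tDia a => subterm_values a
  | _ => [::]
  end].

Lemma mem_neg_subterm_values t : neg (eval neg box dia v t) \in subterm_values t.
Proof. by case: t => * /=; rewrite !inE eqxx orbT. Qed.

Lemma emb_eval t :
  (forall k, in_range (v k) -> h (vM k) = v k) ->
  {in subterm_values t, forall x, in_range x} ->
  h (eval negM boxM diaM vM t) = eval neg box dia v t.
Proof.
move=> hv; elim: t => [k|a IHa b IHb|a IHa b IHb|a IHa|a IHa|a IHa||] //= Ht.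
- exact/hv/Ht/mem_head.
- by rewrite hI IHa ?IHb // => x xs; apply: Ht; rewrite !inE mem_cat xs !orbT.
- by rewrite hU IHa ?IHb // => x xs; apply: Ht; rewrite !inE mem_cat xs !orbT.
- have /IHa IH : {in subterm_values a, forall x, in_range x}.
    by move=> x xs; apply: Ht; rewrite !inE xs !orbT.
  rewrite -IH in Ht *.
  by apply/emb_neg/Ht/mem_head.
- have /IHa IH : {in subterm_values a, forall x, in_range x}.
    by move=> x xs; apply: Ht; rewrite !inE xs !orbT.
  rewrite -IH in Ht *.
  by apply: emb_box; apply: Ht; rewrite !inE eqxx ?orbT.
- have /IHa IH : {in subterm_values a, forall x, in_range x}.
    by move=> x xs; apply: Ht; rewrite !inE xs !orbT.
  rewrite -IH in Ht *.
  apply: emb_dia; apply: Ht; rewrite ?IH !inE ?mem_neg_subterm_values ?eqxx ?orbT //.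
Qed.

End Embedding.

Theorem corollary4 (t1 t2 : term) :
  (forall (d : Order.disp_t) (L : tbDistrLatticeType d) (neg box dia : L -> L),
      MLbd neg box dia -> holds neg box dia t1 t2)
  <->
  (forall (d : Order.disp_t) (L : finTBDistrLatticeType d) (neg box dia : L -> L),
      MLbd neg box dia -> holds neg box dia t1 t2).
Proof.
split=> [Hall d L neg box dia HL | Hfin d L neg box dia HL v]; first exact: Hall.
pose s := subterm_values neg box dia v t1 ++ subterm_values neg box dia v t2.
pose gen (x : seq_sub s) := val x.
pose G := Generated gen.
pose vG k : G := insubd \bot (v k).
have s_range x : x \in s -> exists y : G, val y = x.
  by move=> xs; exists (Sub x (generated_gen gen (SeqSub xs)) : G).
have vG_val k : (exists y : G, val y = v k) -> val (vG k) = v k.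
  by case=> y hy; rewrite insubdK // -hy; apply: valP.
have eval_G t : {subset subterm_values neg box dia v t <= s} ->
    val (eval (@negF _ G) (@boxF _ G) (@diaF _ G) vG t) = eval neg box dia v t.
  move=> ts; apply: (emb_eval HL (MLbd_finite G) val_inj) => // x /ts.
  exact: s_range.
by rewrite -!eval_G ?(Hfin _ _ _ _ _ (MLbd_finite G)) // => x xs;
  rewrite mem_cat xs ?orbT.
Qed.
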